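(* For every $n\in\mathbb Z$, the vector field $S^{(n)}=\partial_{f_{1-n}}$ is given by $$S^{(n)}=\sum_{m\ge1}\Big((n+m)\varphi^{(n+m)}+\sum_{k=0}^{n+1}A_0^{(k,m)}A_2^{(-k-1,n)}\Big)\frac{\partial}{\partial\varphi^{(m)}},$$ where the inner sum is empty if $n+1<0$.
   Context: Let $\varphi^{(1)},\varphi^{(2)},\dots$ be independent variables, set $\varphi^{(-1)}=1$, $\varphi^{(0)}=0$ and $\varphi^{(j)}=0$ for $j\le-2$, and let $\varphi(\lambda)=\sum_{k\ge-1}\varphi^{(k)}\lambda^k=1/\lambda+\sum_{k\ge1}\varphi^{(k)}\lambda^k$, $\varphi'=d\varphi/d\lambda$. For integers $k$ (possibly negative) and $r\ge0$, $A_r^{(k,n)}=[\lambda^{n-r}](\varphi^k\varphi'^r)$ denotes the coefficient of $\lambda^{n-r}$ in the Laurent series $\varphi^k\varphi'^r$. Notation $\mathfrak P_\varphi$: with $w=1/\varphi(\lambda)=\lambda+O(\lambda^3)$, any Laurent series $F$ in $\lambda$ with finitely many negative powers is uniquely $F=\sum_{k\le m}c_k\varphi(\lambda)^k$ with $c_k$ independent of $\lambda$; $\mathfrak P_\varphi F=F-\sum_{k=0}^mc_k\varphi(\lambda)^k$ (a power series in $\lambda$ without constant term). $f_n=\mathfrak P_\varphi(\lambda^n\varphi')$. For $f=\sum_{i\ge1}f^{(i)}\lambda^i$, $\partial_f=\sum_{i\ge1}f^{(i)}\partial/\partial\varphi^{(i)}$. *)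

From HB Require Import structures.
From mathcomp Require Import all_boot all_order all_algebra.
Set Implicit Arguments. Unset Strict Implicit. Unset Printing Implicit Defensive.
Import Order.TTheory GRing.Theory Num.Theory.
Local Open Scope ring_scope.

(* Formal power series over a commutative ring R are
   coefficient functions nat -> R; Laurent series with finitely many negative
   powers are pairs (e, p) meaning lambda^e * p(lambda). *)

Section Series.
Variable R : comNzRingType.

Definition ps := nat -> R.
Definition ps1 : ps := fun i => (i == 0%N)%:R.
Definition psmul (p q : ps) : ps := fun i => \sum_(0 <= j < i.+1) p j * q (i - j)%N.
Definition psexp (p : ps) (n : nat) : ps := iter n (psmul p) ps1.
(* inverse of a power series with constant term 1: sum_j (1 - p)^j
   (exact coefficientwise since (1 - p) has no constant term). *)
Definition psinv1 (p : ps) : ps :=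
  fun i => \sum_(0 <= j < i.+1) psexp (fun k => ps1 k - p k) j i.

Record laurent := Laurent { lexp : int; lps : ps }.

Definition lcoef (F : laurent) (j : int) : R :=
  match (j - lexp F)%R with Posz i => lps F i | Negz _ => 0 end.

Definition lmonom (n : int) : laurent := Laurent n ps1.
Definition lone : laurent := lmonom 0.

Definition ladd (F G : laurent) : laurent :=
  let e := Num.min (lexp F) (lexp G) in
  Laurent e (fun i => lcoef F (e + i%:Z) + lcoef G (e + i%:Z)).
Definition lscale (c : R) (F : laurent) : laurent :=
  Laurent (lexp F) (fun i => c * lps F i).
Definition lsub (F G : laurent) : laurent := ladd F (lscale (-1) G).
Definition lmul (F G : laurent) : laurent :=
  Laurent (lexp F + lexp G) (psmul (lps F) (lps G)).
Definition lderiv (F : laurent) : laurent :=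
  Laurent (lexp F - 1) (fun i => (lexp F + i%:Z)%:~R * lps F i).
Definition lpown (F : laurent) (r : nat) : laurent := iter r (lmul F) lone.
(* inverse, valid for F = lambda^e * p with p(0) = 1 *)
Definition linv1 (F : laurent) : laurent := Laurent (- lexp F) (psinv1 (lps F)).
(* integer power, valid for F = lambda^e * p with p(0) = 1 *)
Definition lpowz (F : laurent) (k : int) : laurent :=
  match k with Posz r => lpown F r | Negz r => lpown (linv1 F) r.+1 end.

(* The variables: x j = phi^(j) for j >= 1 (x 0 is ignored). *)
Variable x : nat -> R.

Definition phic (k : int) : R :=
  if k == -1 then 1 else
  match k with Posz j => if (0 < j)%N then x j else 0 | Negz _ => 0 end.

(* phi(lambda) = sum_{k >= -1} phi^(k) lambda^k = lambda^{-1} (1 + ...) *)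
Definition phi : laurent := Laurent (-1) (fun i => phic (i%:Z - 1)).
Definition dphi : laurent := lderiv phi.

Definition Acoef (r : nat) (k n : int) : R :=
  lcoef (lmul (lpowz phi k) (lpown dphi r)) (n - r%:Z).

(* Projection P_phi: writing F = sum_{k <= m} c_k phi^k, the coefficients
   c_m, ..., c_0 are determined by successively removing the leading terms
   (phi^j = lambda^{-j} (1 + O(lambda^2))): c_j = [lambda^{-j}] of the current
   remainder.  P_phi F = F - sum_{k=0}^m c_k phi^k. *)
Fixpoint peel (F : laurent) (j : nat) : laurent :=
  let F' := lsub F (lscale (lcoef F (- j%:Z)) (lpown phi j)) in
  match j with 0%N => F' | j'.+1 => peel F' j' end.

Definition Pphi (F : laurent) : laurent :=
  peel F `|Num.min (0:int) (lexp F)|%N.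

Definition fser (n : int) : laurent := Pphi (lmul (lmonom n) dphi).

End Series.

(* Put F = lambda^(1-n) phi', so that f_(1-n) = P_phi F.  Since
   phi = lambda^(-1) (1 + O(lambda^2)), the series phi^j and phi^(-k-1) phi'
   (j, k >= 0) are dual for the residue pairing:
   Res (phi^j phi^(-k-1) phi') = - [j = k].  The case j > k is
   Res (phi^a phi') = 0, true because (a+1) phi^a phi' = (phi^(a+1))' is a
   derivative; over a ring with torsion it is first proved for integer
   polynomials in the coefficients of phi and then specialized.  Hence P_phi F
   is F + sum_k Res (F phi^(-k-1) phi') phi^k, and the coefficient of lambda^m
   is read off with Res (F phi^(-k-1) phi') = A_2^(-k-1,n) and
   [lambda^m] phi^k = A_0^(k,m). *)

From HB Require Import structures.
From mathcomp Require Import all_boot all_order all_algebra zify mpoly.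
From Stdlib Require Import FunctionalExtensionality.
Import Order.TTheory GRing.Theory Num.Theory.
Set Implicit Arguments. Unset Strict Implicit. Unset Printing Implicit Defensive.
Local Open Scope ring_scope.

Section PowerSeries.
Variable R : comNzRingType.
Implicit Types p q r : ps R.

Definition ps_trunc (i : nat) p : {poly R} := \poly_(j < i.+1) p j.

Lemma coef_ps_trunc i p j : (j <= i)%N -> (ps_trunc i p)`_j = p j.
Proof. by move=> ji; rewrite coef_poly ltnS ji. Qed.

Lemma psmul_coefM p q i (A B : {poly R}) :
  (forall j, (j <= i)%N -> A`_j = p j) -> (forall j, (j <= i)%N -> B`_j = q j) ->
  psmul p q i = (A * B)`_i.
Proof.
move=> hA hB; rewrite coefM /psmul big_mkord; apply: eq_bigr => j _.
by rewrite hA ?hB // ?leq_subr // -ltnS.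
Qed.

Lemma psmul_trunc p q i j : (j <= i)%N -> psmul p q j = (ps_trunc i p * ps_trunc i q)`_j.
Proof. by move=> ji; apply: psmul_coefM => k kj; rewrite coef_ps_trunc ?(leq_trans kj). Qed.

Lemma psmulC p q : psmul p q = psmul q p.
Proof.
apply: functional_extensionality => i.
by rewrite !(psmul_trunc _ _ (leqnn i)) mulrC.
Qed.

Lemma psmulA p q r : psmul (psmul p q) r = psmul p (psmul q r).
Proof.
apply: functional_extensionality => i.
rewrite (@psmul_coefM _ _ i (ps_trunc i p * ps_trunc i q) (ps_trunc i r)); last 2 first.
- by move=> j ji; rewrite -psmul_trunc.
- by move=> j ji; rewrite coef_ps_trunc.
rewrite (@psmul_coefM _ _ i (ps_trunc i p) (ps_trunc i q * ps_trunc i r)) ?mulrA //.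
- by move=> j ji; rewrite coef_ps_trunc.
- by move=> j ji; rewrite -psmul_trunc.
Qed.

Lemma ps_trunc1 i : ps_trunc i (ps1 R) = 1.
Proof. by apply/polyP => -[|j]; rewrite coef_poly coef1 //=; case: ifP. Qed.

Lemma psmul1l p : psmul (ps1 R) p = p.
Proof.
apply: functional_extensionality => i.
by rewrite (psmul_trunc _ _ (leqnn i)) ps_trunc1 mul1r coef_ps_trunc.
Qed.

Lemma psmul1r p : psmul p (ps1 R) = p.
Proof. by rewrite psmulC psmul1l. Qed.

Lemma psmulZr p q (c : R) : psmul p (fun i => c * q i) = fun i => c * psmul p q i.
Proof.
apply: functional_extensionality => i; rewrite /psmul mulr_sumr.
by apply: eq_bigr => j _; rewrite mulrCA.
Qed.

Lemma psexpS p n : psexp p n.+1 = psmul p (psexp p n).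
Proof. by []. Qed.

Lemma psexp_trunc p n i k : (k <= i)%N -> psexp p n k = (ps_trunc i p ^+ n)`_k.
Proof.
elim: n k => [|n IH] k ki; first by rewrite expr0 coef1.
rewrite exprS psexpS; apply: psmul_coefM => l lk; rewrite ?IH ?coef_ps_trunc //.
all: exact: leq_trans lk ki.
Qed.

Lemma psexp_coef0 p n : p 0%N = 1 -> psexp p n 0 = 1.
Proof. by move=> p0; elim: n => [|n IH] //; rewrite psexpS /psmul big_nat1 p0 IH mul1r. Qed.

(* With [U] the truncation of [1 - p], [(1 - U) * \sum_(j <= i) U^j = 1 - U^(i+1)]
   and [U^(i+1)] has no coefficient of degree [<= i]. *)
Lemma psmul_psinv1 p : p 0%N = 1 -> psmul p (psinv1 p) = ps1 R.
Proof.
move=> p0; apply: functional_extensionality => i.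
set U := ps_trunc i (fun k => ps1 R k - p k).
have U0 : U`_0 = 0 by rewrite coef_ps_trunc // p0 subrr.
have U_small j k : (k < j)%N -> (U ^+ j)`_k = 0.
  elim: j k => [|j IH] k // kj; rewrite exprS coefM big1 // => -[[|l] /= lk] _.
    by rewrite U0 mul0r.
  by rewrite IH ?mulr0 //; rewrite ltnS in lk kj; lia.
have truncE : ps_trunc i p = 1 - U.
  suff -> : U = 1 - ps_trunc i p by rewrite subKr.
  rewrite -(ps_trunc1 i); apply/polyP => k; rewrite coefB !coef_poly.
  by case: ltnP; rewrite ?subr0.
have geom n : (1 - U) * \sum_(j < n) U ^+ j = 1 - U ^+ n.
  elim: n => [|n IH]; first by rewrite big_ord0 mulr0 expr0 subrr.
  by rewrite big_ord_recr /= mulrDr IH mulrBl mul1r -exprS addrA subrK.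
rewrite (@psmul_coefM _ _ i (ps_trunc i p) (\sum_(j < i.+1) U ^+ j)); last 2 first.
- by move=> j ji; rewrite coef_ps_trunc.
- move=> k ki; rewrite /psinv1 coef_sum -(big_mkord xpredT (fun j => (U ^+ j)`_k)).
  rewrite (@big_cat_nat _ _ _ k.+1) //= [X in _ + X]big_nat_cond [X in _ + X]big1.
    by rewrite addr0; apply: eq_big_nat => j _; rewrite (psexp_trunc _ _ ki).
  by move=> j /andP[/andP[kj _] _]; rewrite U_small.
by rewrite truncE geom coefB coef1 U_small // subr0.
Qed.

Lemma psmul_eq_upto K p q p' q' i :
  (forall j, (j <= K)%N -> p j = p' j) -> (forall j, (j <= K)%N -> q j = q' j) ->
  (i <= K)%N -> psmul p q i = psmul p' q' i.
Proof.
move=> pp' qq' iK; apply: eq_big_nat => j /andP[_ ji].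
by rewrite pp' ?qq' //; lia.
Qed.

Lemma psexp_eq_upto K p p' n i :
  (forall j, (j <= K)%N -> p j = p' j) -> (i <= K)%N -> psexp p n i = psexp p' n i.
Proof.
by move=> pp'; elim: n i => [|n IH] i iK //; rewrite !psexpS; apply: (psmul_eq_upto pp').
Qed.

End PowerSeries.

Section PowerSeriesMorphism.
Variables (T R : comNzRingType) (f : {rmorphism T -> R}).

Lemma rmorph_psmul p q i : f (psmul p q i) = psmul (f \o p) (f \o q) i.
Proof. by rewrite rmorph_sum; apply: eq_bigr => j _; rewrite rmorphM. Qed.

Lemma rmorph_psexp p n : f \o psexp p n = psexp (f \o p) n.
Proof.
elim: n => [|n IH]; apply: functional_extensionality => i.
  by rewrite /= /ps1 rmorph_nat.
by rewrite !psexpS /= rmorph_psmul IH.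
Qed.

End PowerSeriesMorphism.

Section EulerOperator.
Variable R : comNzRingType.
Implicit Types p q : ps R.

(* [psweight t p] is the coefficient series of [lambda^(1-t) (lambda^t p)'];
   e.g. [lps (lderiv F) = psweight (lexp F) (lps F)]. *)
Definition psweight (t : int) p : ps R := fun i => (t + i%:Z)%:~R * p i.

Lemma psweight_psmul (s t : int) p q i :
  psweight (s + t) (psmul p q) i = psmul (psweight s p) q i + psmul p (psweight t q) i.
Proof.
rewrite /psweight /psmul mulr_sumr -big_split /=; apply: eq_big_nat => j /andP[_ ji].
rewrite !mulrA -mulrDl [p j * _]mulrC -mulrDl -intrD; congr (_%:~R * _ * _); lia.
Qed.

Lemma psweight_psexp t p n i :
  psweight (n.+1%:Z * t) (psexp p n.+1) i = n.+1%:R * psmul (psexp p n) (psweight t p) i.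
Proof.
elim: n i => [|n IH] i; first by rewrite mul1r psexpS /psexp /= psmul1r psmul1l mul1r.
rewrite [n.+2%:Z]intS mulrDl mul1r psexpS psweight_psmul (functional_extensionality _ _ IH).
by rewrite psmulZr -psmulA -psexpS psmulC [in RHS]mulrS mulrDl mul1r.
Qed.

End EulerOperator.

Section Laurent.
Variable R : comNzRingType.
Implicit Types F G H : laurent R.

Lemma lcoefE F u : lcoef F u = if lexp F <= u then lps F `|u - lexp F|%N else 0.
Proof. by rewrite /lcoef; case: (u - lexp F) (subr_ge0 (lexp F) u) => [i|i] <-. Qed.

Lemma lcoef_lt_lexp F u : u < lexp F -> lcoef F u = 0.
Proof. by rewrite lcoefE leNgt => ->. Qed.

Lemma lcoef_lexpD F (i : nat) : lcoef F (lexp F + i%:Z) = lps F i.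
Proof. by rewrite /lcoef addrAC subrr add0r. Qed.

Lemma lcoef_lone u : lcoef (lone R) u = (u == 0)%:R.
Proof. by rewrite /lcoef /= subr0; case: u => [[|k]|k]. Qed.

Lemma lcoef_ladd F G u : lcoef (ladd F G) u = lcoef F u + lcoef G u.
Proof.
rewrite {1}/lcoef /=; case E: (u - _) => [i|i].
  by rewrite -E subrKC.
have : u < Num.min (lexp F) (lexp G) by lia.
by rewrite lt_min => /andP[uF uG]; rewrite !lcoef_lt_lexp ?addr0.
Qed.

Lemma lcoef_lscale c F u : lcoef (lscale c F) u = c * lcoef F u.
Proof. by rewrite /lcoef /=; case: (u - lexp F) => [i|i]; rewrite ?mulr0. Qed.

Lemma lcoef_lsub F G u : lcoef (lsub F G) u = lcoef F u - lcoef G u.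
Proof. by rewrite lcoef_ladd lcoef_lscale mulN1r. Qed.

Lemma lcoef_lmonom_lmul s F u : lcoef (lmul (lmonom R s) F) u = lcoef F (u - s).
Proof. by rewrite /lcoef /= psmul1l opprD addrA. Qed.

Lemma lcoef_lderiv F u : lcoef (lderiv F) u = (u + 1)%:~R * lcoef F (u + 1).
Proof.
rewrite /lcoef /= opprB addrA.
by case E: (u + 1 - lexp F) => [i|i]; rewrite ?mulr0 // -E subrKC.
Qed.

Lemma lmulC F G : lmul F G = lmul G F.
Proof. by rewrite /lmul addrC psmulC. Qed.

Lemma lmulA F G H : lmul (lmul F G) H = lmul F (lmul G H).
Proof. by rewrite /lmul /= addrA psmulA. Qed.

Lemma lmul1l F : lmul (lone R) F = F.
Proof. by case: F => e p; rewrite /lmul /= add0r psmul1l. Qed.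

Lemma lmul1r F : lmul F (lone R) = F.
Proof. by rewrite lmulC lmul1l. Qed.

Lemma lexp_lmul F G : lexp (lmul F G) = lexp F + lexp G.
Proof. by []. Qed.

Lemma lpownS F j : lpown F j.+1 = lmul F (lpown F j).
Proof. by []. Qed.

Lemma lexp_lpown F j : lexp (lpown F j) = j%:Z * lexp F.
Proof. by elim: j => [|j IH]; rewrite ?mul0r // lpownS /= IH intS mulrDl mul1r. Qed.

Lemma lps_lpown F j : lps (lpown F j) = psexp (lps F) j.
Proof. by elim: j => [|j IH] //; rewrite lpownS /= IH. Qed.

Lemma sum_int_window (h : int -> R) a N a' N' :
  (forall t, h t != 0 -> a <= t < a + N%:Z) ->
  (forall t, h t != 0 -> a' <= t < a' + N'%:Z) ->
  \sum_(i < N) h (a + i%:Z) = \sum_(i < N') h (a' + i%:Z).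
Proof.
have windowE b M : \sum_(i < M) h (b + i%:Z) = \sum_(t <- [seq b + i%:Z | i <- iota 0 M]) h t.
  by rewrite big_map -(big_mkord xpredT (fun i => h (b + i%:Z))) /index_iota subn0.
have mem_window b M t : b <= t < b + M%:Z -> t \in [seq b + i%:Z | i <- iota 0 M].
  by move=> /andP[bt tM]; apply/mapP; exists `|t - b|%N; [rewrite mem_iota; lia | lia].
have uniq_window b M : uniq [seq b + i%:Z | i <- iota 0 M].
  by rewrite map_inj_uniq ?iota_uniq // => i j /addrI [].
move=> hN hN'; rewrite !windowE; apply: perm_big_supp; apply: uniq_perm.
- exact/filter_uniq/uniq_window.
- exact/filter_uniq/uniq_window.
move=> t; rewrite !mem_filter; case: eqVneq => //= ht.
by rewrite !mem_window ?hN ?hN'.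
Qed.

Lemma lcoef_lmul_window F G e a N :
  (forall t, lcoef F t * lcoef G (e - t) != 0 -> a <= t < a + N%:Z) ->
  lcoef (lmul F G) e = \sum_(i < N) lcoef F (a + i%:Z) * lcoef G (e - (a + i%:Z)).
Proof.
move=> hN; have supp t : lcoef F t * lcoef G (e - t) != 0 -> lexp F <= t <= e - lexp G.
  have [tF|Ft] := ltP t (lexp F); first by rewrite lcoef_lt_lexp ?mul0r ?eqxx.
  have [tG|Gt] := ltP (e - t) (lexp G); first by rewrite (lcoef_lt_lexp tG) mulr0 eqxx.
  by move=> _; lia.
rewrite lcoefE /=; case: ifP => [le_e|lt_e].
  set k := absz (e - (lexp F + lexp G))%R.
  rewrite (@sum_int_window _ _ _ (lexp F) k.+1 hN); last first.
    by move=> t /supp; lia.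
  rewrite /psmul big_mkord; apply: eq_bigr => -[j /= jk] _.
  rewrite lcoef_lexpD lcoefE ifT; last by lia.
  by congr (_ * lps G _); lia.
rewrite (@sum_int_window _ _ _ 0 0 hN) ?big_ord0 // => t /supp; lia.
Qed.

Lemma lcoef_lmul_sum F G a b e N :
  (forall u, u < a -> lcoef F u = 0) -> (forall v, v < b -> lcoef G v = 0) ->
  e - b < a + N%:Z ->
  lcoef (lmul F G) e = \sum_(i < N) lcoef F (a + i%:Z) * lcoef G (e - (a + i%:Z)).
Proof.
move=> Fa Gb eN; apply: lcoef_lmul_window => t.
have [ta|ge_ta] := ltP t a; first by rewrite Fa ?mul0r ?eqxx.
have [tb|ge_tb] := ltP (e - t) b; first by rewrite Gb ?mulr0 ?eqxx.
by move=> _; lia.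
Qed.

Lemma lcoef_lmul_eq0 F G a b e :
  (forall u, u < a -> lcoef F u = 0) -> (forall v, v < b -> lcoef G v = 0) ->
  e < a + b -> lcoef (lmul F G) e = 0.
Proof.
by move=> Fa Gb eab; rewrite (lcoef_lmul_sum (N := 0) Fa Gb) ?big_ord0 // addr0 ltrBlDr.
Qed.

Lemma lcoef_lmul_lincomb F G (H : nat -> laurent R) (d : nat -> R) M K a b e :
  (forall u, lcoef G u = lcoef F u - \sum_(j < M) d j * lcoef (H j) u) ->
  (forall u, u < a -> lcoef F u = 0) -> (forall j u, (j < M)%N -> u < a -> lcoef (H j) u = 0) ->
  (forall v, v < b -> lcoef K v = 0) ->
  lcoef (lmul G K) e = lcoef (lmul F K) e - \sum_(j < M) d j * lcoef (lmul (H j) K) e.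
Proof.
move=> GE Fa Ha Kb; set N := absz (e - b - a)%R; have eN : e - b < a + N.+1%:Z by lia.
have Ga u : u < a -> lcoef G u = 0.
  by move=> ua; rewrite GE Fa // big1 ?subr0 // => j _; rewrite Ha ?mulr0.
rewrite !(lcoef_lmul_sum _ Kb eN) //; under eq_bigr do rewrite GE mulrBl mulr_suml.
rewrite sumrB exchange_big; congr (_ - _); apply: eq_bigr => j _.
rewrite (lcoef_lmul_sum (Ha j ^~ (ltn_ord j)) Kb eN) mulr_sumr.
by apply: eq_bigr => i _; rewrite mulrA.
Qed.

End Laurent.

Notation lres F := (lcoef F (-1)).

Section Phi.
Variables (R : comNzRingType) (x : nat -> R).
Local Notation Phi := (phi x).

Lemma lexp_phi : lexp Phi = -1. Proof. by []. Qed.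

Lemma lexp_dphi : lexp (dphi x) = -2. Proof. by []. Qed.

Lemma lps_phi i : lps Phi i = phic x (i%:Z - 1).
Proof. by []. Qed.

Lemma lps_dphi i : lps (dphi x) i = (-1 + i%:Z)%:~R * lps Phi i.
Proof. by []. Qed.

Lemma lcoef_phi u : lcoef Phi u = phic x u.
Proof.
rewrite lcoefE lexp_phi lps_phi; case: ifP => [le_u|lt_u]; first by congr phic; lia.
by rewrite /phic ifF; [case: u lt_u => // k; lia | lia].
Qed.

Lemma lcoef_dphi u : lcoef (dphi x) u = (u + 1)%:~R * phic x (u + 1).
Proof. by rewrite lcoef_lderiv lcoef_phi. Qed.

Definition phi_inv : laurent R := linv1 Phi.

Definition phi_dual (k : nat) : laurent R := lmul (lpown phi_inv k.+1) (dphi x).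

Lemma lmul_phi_inv : lmul phi_inv Phi = lone R.
Proof. by rewrite /lmul /= psmulC psmul_psinv1. Qed.

Lemma lexp_phi_pown j : lexp (lpown Phi j) = - j%:Z.
Proof. by rewrite lexp_lpown lexp_phi mulrN1. Qed.

Lemma lexp_phi_inv_pown j : lexp (lpown phi_inv j) = j%:Z.
Proof. by rewrite lexp_lpown mulr1. Qed.

Lemma lexp_phi_dual k : lexp (phi_dual k) = k%:Z - 1.
Proof. by rewrite lexp_lmul lexp_phi_inv_pown lexp_dphi; lia. Qed.

Lemma lcoef_phi_pown_lt j u : u < - j%:Z -> lcoef (lpown Phi j) u = 0.
Proof. by move=> u_lt; rewrite lcoef_lt_lexp // lexp_phi_pown. Qed.

Lemma lcoef_phi_pown_lead j : lcoef (lpown Phi j) (- j%:Z) = 1.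
Proof.
have := lcoef_lexpD (lpown Phi j) 0; rewrite lexp_phi_pown addr0 => ->.
by rewrite lps_lpown psexp_coef0.
Qed.

Lemma lmul_phi_pown_inv_pown j l : lmul (lpown Phi j) (lpown phi_inv l) =
  if (l <= j)%N then lpown Phi (j - l) else lpown phi_inv (l - j).
Proof.
elim: j l => [|j IH] [|l]; rewrite ?lmul1l ?lmul1r ?subn0 //.
rewrite !lpownS lmulA -(lmulA (lpown Phi j)) (lmulC (lpown Phi j) phi_inv).
by rewrite lmulA -lmulA (lmulC Phi) lmul_phi_inv lmul1l IH.
Qed.

Lemma lres_phi_inv_dphi : lres (lmul phi_inv (dphi x)) = -1.
Proof.
rewrite lcoefE /= /psmul /= big_nat1 /psinv1 /= big_nat1 /=.
by rewrite /ps1 /= mul1r /phic /= mulN1r.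
Qed.

End Phi.

Section PhiPowResidue.
Variable R : comNzRingType.

Definition phi_pow_residue (x : nat -> R) (a : nat) : R :=
  psmul (psexp (lps (phi x)) a) (lps (dphi x)) a.+1.

Lemma lres_phi_pown_dphi x a : lres (lmul (lpown (phi x) a) (dphi x)) = phi_pow_residue x a.
Proof.
rewrite lcoefE lexp_lmul lexp_lpown lexp_phi lexp_dphi ifT; last by lia.
by rewrite /= lps_lpown; congr psmul; lia.
Qed.

Lemma phi_pow_residue_torsion x a : a.+1%:R * phi_pow_residue x a = 0.
Proof.
have := psweight_psexp (-1) (lps (phi x)) a a.+1.
by rewrite /psweight mulrN1 addNr mul0r => /esym.
Qed.

Lemma phi_pow_residue_local (x x' : nat -> R) a :
  (forall j, (j <= a)%N -> x j = x' j) -> phi_pow_residue x a = phi_pow_residue x' a.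
Proof.
move=> xx'; have phiE j : (j <= a.+1)%N -> lps (phi x) j = lps (phi x') j.
  move=> ja; rewrite !lps_phi /phic; case: ifP => // _.
  by case E: (j%:Z - 1) => [[|k]|k] //=; rewrite xx' //; lia.
apply: (@psmul_eq_upto _ a.+1) => // j ja; first exact: psexp_eq_upto phiE ja.
by rewrite !lps_dphi phiE.
Qed.

End PhiPowResidue.

Lemma rmorph_phi_pow_residue (T R : comNzRingType) (f : {rmorphism T -> R}) y a :
  f (phi_pow_residue y a) = phi_pow_residue (f \o y) a.
Proof.
have rmorph_phi i : f (lps (phi y) i) = lps (phi (f \o y)) i.
  rewrite !lps_phi /phic; case: ifP => _; first exact: rmorph1.
  by case: (i%:Z - 1) => [[|j]|j]; rewrite ?rmorph0.
have comp_phi : f \o lps (phi y) = lps (phi (f \o y)).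
  exact: functional_extensionality rmorph_phi.
rewrite rmorph_psmul rmorph_psexp comp_phi; congr psmul.
apply: functional_extensionality => i.
by rewrite /comp !lps_dphi rmorphM rmorph_int rmorph_phi.
Qed.

Lemma phi_pow_residue_eq0 (R : comNzRingType) (x : nat -> R) a : phi_pow_residue x a = 0.
Proof.
pose y (j : nat) : {mpoly int[a.+1]} := if (j < a.+1)%N then 'X_(inord j) else 0.
pose f : {rmorphism {mpoly int[a.+1]} -> R} := mmap (intmul 1) (fun i : 'I_a.+1 => x i).
have y0 : phi_pow_residue y a = 0.
  apply/mpolyP => m; have /eqP := congr1 (mcoeff m) (phi_pow_residue_torsion y a).
  by rewrite mulr_natl mcoeffMn mcoeff0 mulrn_eq0 => /eqP.
rewrite (@phi_pow_residue_local _ _ (f \o y)) -?rmorph_phi_pow_residue ?y0 ?rmorph0 // => j ja.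
by rewrite /= /y ltnS ja mmapX mmap1U inordK.
Qed.

Section Projection.
Variables (R : comNzRingType) (x : nat -> R).
Local Notation Phi := (phi x).

Lemma lres_phi_pown_dual j k : lres (lmul (lpown Phi j) (phi_dual x k)) = - (j == k)%:R.
Proof.
rewrite -lmulA lmul_phi_pown_inv_pown; case: ifP => [kj|jk].
  by rewrite lres_phi_pown_dphi phi_pow_residue_eq0 gtn_eqF ?oppr0.
case: (eqVneq j k) => [->|neq_jk]; first by rewrite subSnn lpownS lmul1r lres_phi_inv_dphi.
by rewrite lcoef_lt_lexp ?oppr0 // lexp_lmul lexp_phi_inv_pown lexp_dphi; lia.
Qed.

Lemma peel_decomposition (F : laurent R) J : exists d : nat -> R,
  (forall u, lcoef (peel x F J) u = lcoef F u - \sum_(j < J.+1) d j * lcoef (lpown Phi j) u) /\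
  ((forall u, u < - J%:Z -> lcoef F u = 0) -> forall u, u <= 0 -> lcoef (peel x F J) u = 0).
Proof.
elim: J F => [|J IH] F.
  exists (fun _ => lcoef F 0); split => [u|F0 u u_le0].
    by rewrite lcoef_lsub lcoef_lscale big_ord1.
  rewrite lcoef_lsub lcoef_lscale lcoef_lone.
  have [u_lt0|->] : u < 0 \/ u = 0 by lia.
    by rewrite F0 // lt_eqF // mulr0 subr0.
  by rewrite mulr1 subrr.
set c := lcoef F (- J.+1%:Z); set F' := lsub F (lscale c (lpown Phi J.+1)).
have [d [peelE peel0]] := IH F'.
exists (fun j => if j == J.+1 then c else d j); split => [u|F_J u u_le0].
  rewrite [peel _ _ _]/= -/F' peelE lcoef_lsub lcoef_lscale [in RHS]big_ord_recr /= -lpownS.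
  rewrite eqxx [in RHS](eq_bigr (fun j : 'I_J.+1 => d j * lcoef (lpown Phi j) u)); last first.
    by move=> [j /= j_lt] _; rewrite ifF //; lia.
  by rewrite opprD addrA addrAC.
apply: peel0 => // v v_lt; rewrite lcoef_lsub lcoef_lscale.
have [v_lt'|->] : v < - J.+1%:Z \/ v = - J.+1%:Z by lia.
  by rewrite F_J // lcoef_phi_pown_lt // mulr0 subr0.
by rewrite lcoef_phi_pown_lead mulr1 subrr.
Qed.

Lemma lcoef_peel F J u : (forall v, v < - J%:Z -> lcoef F v = 0) ->
  lcoef (peel x F J) u =
    lcoef F u + \sum_(k < J.+1) lres (lmul F (phi_dual x k)) * lcoef (lpown Phi k) u.
Proof.
move=> F_J; have [d [peelE /(_ F_J) peel0]] := peel_decomposition F J.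
rewrite peelE -sumrN; congr (_ + _); apply: eq_bigr => -[k /= k_lt] _.
have dual_lt v : v < k%:Z - 1 -> lcoef (phi_dual x k) v = 0.
  by move=> v_lt; rewrite lcoef_lt_lexp // lexp_phi_dual.
have : lres (lmul (peel x F J) (phi_dual x k)) = 0.
  by apply: (lcoef_lmul_eq0 (a := 1) _ dual_lt) => [v v_lt|]; [apply: peel0 | ]; lia.
rewrite (lcoef_lmul_lincomb (-1) peelE F_J _ dual_lt); last first.
  by move=> j v j_lt v_lt; apply: lcoef_phi_pown_lt; lia.
have -> : \sum_(j < J.+1) d j * lres (lmul (lpown Phi j) (phi_dual x k)) = - d k.
  rewrite (bigD1 (Ordinal k_lt)) //= lres_phi_pown_dual eqxx mulrN1 big1 ?addr0 //.
  move=> j neq_jk; have /negbTE j_neq : (j : nat) != k := neq_jk.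
  by rewrite lres_phi_pown_dual j_neq oppr0 mulr0.
by rewrite opprK => /eqP; rewrite addr_eq0 => /eqP ->; rewrite mulNr.
Qed.

Lemma lcoef_Pphi F u : lcoef (Pphi x F) u = lcoef F u +
  \sum_(k < (absz (Num.min 0 (lexp F))).+1) lres (lmul F (phi_dual x k)) * lcoef (lpown Phi k) u.
Proof.
apply: lcoef_peel => v v_lt; apply: lcoef_lt_lexp.
have min_le0 : Num.min 0 (lexp F) <= 0 by rewrite ge_min lexx.
have min_le : Num.min 0 (lexp F) <= lexp F by rewrite ge_min lexx orbT.
lia.
Qed.

End Projection.

Theorem mainTheorem15 (R : comNzRingType) (x : nat -> R) (n : int) (m : nat) :
  (0 < m)%N ->
  lcoef (fser x (1 - n)) m%:Z =
    (n + m%:Z)%:~R * phic x (n + m%:Z) +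
    (if (0 <= n + 1) then
       \sum_(0 <= k < absz (n + 2)) Acoef x 0 k%:Z m%:Z * Acoef x 2 (- k%:Z - 1) n
     else 0).
Proof.
move=> m_gt0; set F := lmul (lmonom R (1 - n)) (dphi x).
have lexpF : lexp F = -1 - n by rewrite lexp_lmul lexp_dphi /=; lia.
have lcoefF u : lcoef F u = (u + n)%:~R * phic x (u + n).
  by rewrite lcoef_lmonom_lmul lcoef_dphi; congr (_%:~R * phic x _); lia.
have residueF k : lres (lmul F (phi_dual x k)) = Acoef x 2 (- k%:Z - 1) n.
  rewrite /Acoef (_ : - k%:Z - 1 = Negz k); last by rewrite NegzE; lia.
  rewrite lmulA lcoef_lmonom_lmul [lmul (dphi x) _]lmulC lmulA !lpownS lmul1r.
  by congr lcoef; lia.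
have A0 k u : lcoef (lpown (phi x) k) u = Acoef x 0 k u by rewrite /Acoef lmul1r subr0.
rewrite /fser -/F lcoef_Pphi lcoefF (addrC m%:Z) lexpF.
case: ifP => [n_ge|n_lt]; congr (_ + _).
  rewrite min_r; last by lia.
  rewrite (_ : (absz (-1 - n)%R).+1 = absz (n + 2)%R); last by lia.
  by rewrite big_mkord; apply: eq_bigr => k _; rewrite residueF A0 mulrC.
rewrite min_l; last by lia.
by rewrite big_ord1 lcoef_lone eqz_nat (negbTE (lt0n_neq0 m_gt0)) mulr0.
Qed.
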